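(* Let $N\ge 2$ and $M\ge 1$ be integers and consider the indirect control system described in the context, with real Lie algebra $\mathcal{L}$ generated by $iH_0$ and $iH_x^j=i(1_S\otimes\sigma_x^j)$, $iH_y^j=i(1_S\otimes\sigma_y^j)$, $j=1,\dots,M$. If $i(1_S\otimes\sigma_x^j\sigma_x^{j+1})\in\mathcal{L}$ for every $j=1,2,\dots,M-1$, then $i(1_S\otimes\sigma_{[\alpha]})\in\mathcal{L}$ for every $[\alpha]=(\alpha_1,\dots,\alpha_M)\in\{x,y,z,0\}^M$ with $[\alpha]\neq(0,0,\dots,0)$.
   Context: The controlled system is $\mathbb{C}^N$ with orthonormal basis $|1\rangle,\dots,|N\rangle$; $e_{jk}=|j\rangle\langle k|$. $H_S=\sum_{j=1}^N E_j e_{jj}$ with real $E_j$, $\sum_j E_j=0$. For $1\le j<k\le N$: $x_{jk}=e_{jk}+e_{kj}$, $y_{jk}=i(e_{jk}-e_{kj})$, $h_j=e_{jj}-e_{j+1,j+1}$; $x_j=x_{j,j+1}$, $y_j=y_{j,j+1}$; $s_j^{(1)}=x_j$, $s_j^{(2)}=y_j$. The accessor is $(\mathbb{C}^2)^{\otimes M}$ ($M$ qubits); $\sigma_\alpha^j=1\otimes\cdots\otimes\sigma_\alpha\otimes\cdots\otimes 1$ is the Pauli matrix $\sigma_\alpha$ ($\alpha=x,y,z$) acting on the $j$-th qubit, $\sigma_0=1$, and for $[\alpha]\in\{x,y,z,0\}^M$, $\sigma_{[\alpha]}=\prod_{j=1}^M\sigma^j_{\alpha_j}$. $1_S,1_A$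 denote identities. $H_A=\sum_{j=1}^M\hbar\omega_j\sigma_z^j+\sum_{j=1}^{M-1}c_j\sigma_x^j\sigma_x^{j+1}$ (real $\omega_j,c_j$); $H_S'=\sum_{j=1}^{N-1}d_j x_j\otimes 1_A$ (real $d_j$); $H_{SA}=\sum_{j=1}^{N-1}\sum_{k=1}^2\sum_{[\alpha]\in\{x,y\}^M} g^{j(k)}_{[\alpha]}\, s_j^{(k)}\otimes\sigma_{[\alpha]}$ (real coefficients); $H_0=H_S\otimes 1_A+H_S'+1_S\otimes H_A+H_{SA}$. *)

From HB Require Import structures.
From mathcomp Require Import all_boot all_order all_algebra.
From mathcomp Require Import complex mxtens.
Set Implicit Arguments. Unset Strict Implicit. Unset Printing Implicit Defensive.
Import Order.TTheory GRing.Theory Num.Theory.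
Local Open Scope ring_scope.
Local Open Scope complex_scope.

Section Defs.
Variable R : rcfType.
Local Notation C := (R[i]).
Definition iC : C := Complex 0 1.

Fixpoint pow2 (n : nat) : nat := match n with 0 => 1 | S n' => 2 * pow2 n' end.

Inductive pauli := P0 | PX | PY | PZ.

Definition pauli_mx (a : pauli) : 'M[C]_2 :=
  match a with
  | P0 => 1%:M
  | PX => \matrix_(r < 2, s < 2) (if r == s then 0 else 1)
  | PY => \matrix_(r < 2, s < 2)
            (if r == s then 0 else if (r == 0 :> nat) then - iC else iC)
  | PZ => \matrix_(r < 2, s < 2)
            (if r == s then (if (r == 0 :> nat) then 1 else -1) else 0)
  end.

(* Kronecker product f 0 (x) f 1 (x) ... (x) f (n-1) (qubit 1 leftmost) *)
Fixpoint ktens (n : nat) (f : nat -> 'M[C]_2) : 'M[C]_(pow2 n) :=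
  match n as n0 return 'M[C]_(pow2 n0) with
  | 0 => 1%:M
  | S n' => tensmx (f 0) (ktens n' (fun k => f k.+1))
  end.

(* sigma_a^j : Pauli a on the j-th qubit (0-based j), identity elsewhere *)
Definition sigma_site (M j : nat) (a : pauli) : 'M[C]_(pow2 M) :=
  ktens M (fun k => if k == j then pauli_mx a else 1%:M).

Definition sigma_string (M : nat) (al : 'I_M -> pauli) : 'M[C]_(pow2 M) :=
  \big[mulmx/1%:M]_(j < M) sigma_site M j (al j).

(* e_{jk} = |j><k| on C^N (0-based indices) *)
Definition emat (N j k : nat) : 'M[C]_N :=
  \matrix_(a < N, b < N) (((a == j :> nat) && (b == k :> nat))%:R).

(* x_j = x_{j,j+1}, y_j = y_{j,j+1} (0-based j) *)
Definition xs (N j : nat) : 'M[C]_N := emat N j j.+1 + emat N j.+1 j.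
Definition ys (N j : nat) : 'M[C]_N := iC *: (emat N j j.+1 - emat N j.+1 j).
(* s_j^(1) = x_j, s_j^(2) = y_j ; k : 'I_2 with 0 <-> (1), 1 <-> (2) *)
Definition sop (N j : nat) (k : 'I_2) : 'M[C]_N :=
  if k == 0 :> nat then xs N j else ys N j.

Definition otimes (N M : nat) (A : 'M[C]_N) (B : 'M[C]_(pow2 M))
  : 'M[C]_(N * pow2 M) := tensmx A B.

(* The total Hamiltonian H_0 = H_S (x) 1_A + H_S' + 1_S (x) H_A + H_SA.
   Couplings in H_SA are indexed by [alpha] in {x,y}^M, encoded as
   b : {ffun 'I_M -> bool} (false = x, true = y). *)
Definition xy (b : bool) : pauli := if b then PY else PX.

Definition H0 (N M : nat) (E : 'I_N -> R) (d : nat -> R) (hbar : R)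
  (omega : nat -> R) (c : nat -> R)
  (g : nat -> 'I_2 -> {ffun 'I_M -> bool} -> R) : 'M[C]_(N * pow2 M) :=
  let HS := \sum_(j < N) (E j)%:C *: emat N j j in
  let HS' := \sum_(j < N.-1) (d j)%:C *: otimes (xs N j) (1%:M : 'M_(pow2 M)) in
  let HA := \sum_(j < M) (hbar * omega j)%:C *: sigma_site M j PZ
            + \sum_(j < M.-1) (c j)%:C *: (sigma_site M j PX *m sigma_site M j.+1 PX) in
  let HSA := \sum_(j < N.-1) \sum_(k < 2) \sum_(b : {ffun 'I_M -> bool})
               (g j k b)%:C *: otimes (sop N j k) (sigma_string (fun q => xy (b q))) in
  otimes HS 1%:M + HS' + otimes (1%:M) HA + HSA.

Inductive lie_gen (n : nat) (S : 'M[C]_n -> Prop) : 'M[C]_n -> Prop :=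
| lie_base X : S X -> lie_gen S X
| lie_zero : lie_gen S 0
| lie_add X Y : lie_gen S X -> lie_gen S Y -> lie_gen S (X + Y)
| lie_scale (r : R) X : lie_gen S X -> lie_gen S (r%:C *: X)
| lie_bracket X Y : lie_gen S X -> lie_gen S Y -> lie_gen S (X *m Y - Y *m X).

Definition ctrl_gens (N M : nat) (H : 'M[C]_(N * pow2 M)) (X : 'M[C]_(N * pow2 M)) : Prop :=
  X = iC *: H \/
  exists j : 'I_M, X = iC *: otimes (1%:M : 'M_N) (sigma_site M j PX)
                \/ X = iC *: otimes (1%:M : 'M_N) (sigma_site M j PY).

End Defs.

(* If the Pauli strings P and Q anticommute, then [iP, iQ] = -2 c PQ, where
   the phase c of PQ squares to -1; so c = +-i and the bracket is a nonzero
   real multiple of i(PQ).  Hence the set of strings i(1_S (x) P) lying in the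
   Lie algebra is closed under products of anticommuting pairs.  Starting from
   sigma_x^j and sigma_y^j this yields sigma_z^j, hence every one-site string,
   and multiplying by one-site strings turns any non-trivial label of a string
   into any other.  From sigma_x^j sigma_x^(j+1) one then gets every
   nearest-neighbour two-site string, and multiplying by those lets a
   non-trivial site rewrite its neighbour arbitrarily.  Induction on the extent
   of the support reaches every non-trivial string. *)

From HB Require Import structures.
From mathcomp Require Import all_boot all_order all_algebra.
From mathcomp Require Import complex mxtens zify.
Import GRing.Theory Num.Theory.
Set Implicit Arguments. Unset Strict Implicit.
Local Open Scope ring_scope.
Local Open Scope complex_scope.

Definition pauli_eqb (a b : pauli) : bool :=
  match a, b with P0, P0 | PX, PX | PY, PY | PZ, PZ => true | _, _ => false end.

Lemma pauli_eqP : Equality.axiom pauli_eqb.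
Proof. by case; case; constructor. Qed.

HB.instance Definition _ := hasDecEq.Build pauli pauli_eqP.

Section PauliLabels.

Implicit Types a b : pauli.

Definition pauli_mul a b : pauli :=
  match a, b with
  | P0, b => b | a, P0 => a
  | PX, PX | PY, PY | PZ, PZ => P0
  | PX, PY | PY, PX => PZ
  | PY, PZ | PZ, PY => PX
  | PZ, PX | PX, PZ => PY
  end.

Definition pauli_comm a b : bool := [|| a == P0, b == P0 | a == b].

Definition pauli_other a : pauli := if a == PX then PY else PX.

Lemma pauli_mulC a b : pauli_mul a b = pauli_mul b a.
Proof. by case: a; case: b. Qed.

Lemma pauli_mulr1 a : pauli_mul a P0 = a.
Proof. by case: a. Qed.

Lemma pauli_mulxx a : pauli_mul a a = P0.
Proof. by case: a. Qed.

Lemma pauli_mulKr a b : pauli_mul a (pauli_mul a b) = b.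
Proof. by case: a; case: b. Qed.

Lemma pauli_mul_eq1 a b : (pauli_mul a b == P0) = (a == b).
Proof. by case: a; case: b. Qed.

Lemma pauli_mul_eql a b : (pauli_mul a b == a) = (b == P0).
Proof. by case: a; case: b. Qed.

Lemma pauli_comm1 b : pauli_comm P0 b.
Proof. by []. Qed.

Lemma pauli_commr1 a : pauli_comm a P0.
Proof. by rewrite /pauli_comm eqxx orbT. Qed.

Lemma pauli_commrr a : pauli_comm a a.
Proof. by rewrite /pauli_comm eqxx !orbT. Qed.

Lemma pauli_anticomm a b : a != P0 -> b != P0 -> a != b -> ~~ pauli_comm a b.
Proof. by rewrite /pauli_comm => /negbTE-> /negbTE-> /negbTE->. Qed.

Lemma pauli_other_neq1 a : pauli_other a != P0.
Proof. by case: a. Qed.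

Lemma pauli_other_neq a : pauli_other a != a.
Proof. by case: a. Qed.

End PauliLabels.

Section PauliLabelStrings.

Implicit Types (f g : nat -> pauli) (a : pauli) (i j k n : nat).

Definition set_site f j a : nat -> pauli := fun k => if k == j then a else f k.

Definition site j a : nat -> pauli := set_site (fun=> P0) j a.

Definition pmulf f g : nat -> pauli := fun k => pauli_mul (f k) (g k).

Definition anticomm_count n f g : nat := \sum_(k < n) ~~ pauli_comm (f k) (g k).

Definition adjacent i j : bool := (j == i.+1) || (i == j.+1).

Lemma set_site_eq f j a : set_site f j a j = a.
Proof. by rewrite /set_site eqxx. Qed.

Lemma set_site_neq f j k a : k != j -> set_site f j a k = f k.
Proof. by rewrite /set_site => /negbTE->. Qed.

Lemma odd_anticomm_count1 n f g j : (j < n)%N ->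
    (forall k, (k < n)%N -> k != j -> pauli_comm (f k) (g k)) ->
    ~~ pauli_comm (f j) (g j) -> odd (anticomm_count n f g).
Proof.
move=> lt_jn fg_comm fg_anti; rewrite /anticomm_count (bigD1 (Ordinal lt_jn)) //=.
by rewrite fg_anti big1 // => k /negbTE; rewrite -val_eqE => /= /negbT /fg_comm ->.
Qed.

Lemma adjacent_neq i j : adjacent i j -> i != j.
Proof. by case/orP => /eqP->; rewrite ?(ltn_eqF (ltnSn _)) ?(gtn_eqF (ltnSn _)). Qed.

End PauliLabelStrings.

Section PauliMatrices.

Variable R : rcfType.
Local Notation iC := (iC R).
Implicit Types a b : pauli.

Lemma sqr_iC : iC ^+ 2 = -1.
Proof. exact: sqr_i. Qed.

Definition pauli_phase a b : R[i] :=
  match a, b with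
  | PX, PY | PY, PZ | PZ, PX => iC
  | PY, PX | PZ, PY | PX, PZ => - iC
  | _, _ => 1
  end.

Lemma pauli_mx_mul a b :
  pauli_mx R a *m pauli_mx R b = pauli_phase a b *: pauli_mx R (pauli_mul a b).
Proof.
case: a; case: b; rewrite /= ?mul1mx ?mulmx1 ?scale1r //;
apply/matrixP => r s; rewrite !mxE !big_ord_recr big_ord0 !mxE;
case: r => [[|[|//]]] ?; case: s => [[|[|//]]] ? /=;
by rewrite ?(mulr0, mul0r, mulr1, mul1r, addr0, add0r, mulrN, mulNr) -?expr2 ?sqr_iC ?opprK.
Qed.

Lemma pauli_phaseC a b :
  pauli_phase b a = (-1) ^+ (~~ pauli_comm a b) * pauli_phase a b.
Proof. by case: a; case: b; rewrite /= ?mul1r ?mulN1r ?opprK. Qed.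

Lemma sqr_pauli_phase a b : pauli_phase a b ^+ 2 = (-1) ^+ (~~ pauli_comm a b).
Proof. by case: a; case: b; rewrite /= ?expr1n ?sqrrN ?sqr_iC. Qed.

End PauliMatrices.

Section Tensor.

Variable R : comPzRingType.

Lemma tensmxZl m n p q (c : R) (A : 'M[R]_(m, n)) (B : 'M[R]_(p, q)) :
  (c *: A) *t B = c *: (A *t B).
Proof. by apply/matrixP => i j; rewrite !mxE mulrA. Qed.

Lemma tensmxZr m n p q (c : R) (A : 'M[R]_(m, n)) (B : 'M[R]_(p, q)) :
  A *t (c *: B) = c *: (A *t B).
Proof. by apply/matrixP => i j; rewrite !mxE mulrCA. Qed.

Lemma tensmx11 m n : (1%:M : 'M[R]_m) *t (1%:M : 'M[R]_n) = 1%:M.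
Proof.
apply/matrixP => i j.
case: (mxtens_indexP i) => i1 i2; case: (mxtens_indexP j) => j1 j2.
rewrite tensmxE !mxE (can_eq (@mxtens_indexK _ _)) xpair_eqE.
by case: eqP; case: eqP; rewrite /= ?mulr1 ?mulr0 ?mul0r.
Qed.

End Tensor.

Section Ktens.

Variable R : rcfType.
Local Notation C := R[i].
Implicit Types f g : nat -> 'M[C]_2.

Lemma eq_ktens n f g : (forall k, (k < n)%N -> f k = g k) -> ktens n f = ktens n g.
Proof.
elim: n f g => [//|n IH] f g fg /=.
by rewrite fg // (IH _ (fun k => g k.+1)) // => k lt_kn; apply: fg.
Qed.

Lemma ktens1 n : ktens n (fun=> 1%:M) = 1%:M :> 'M[C]_(pow2 n).
Proof. by elim: n => [//|n IH] /=; rewrite IH tensmx11. Qed.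

Lemma ktens_mul n f g : ktens n f *m ktens n g = ktens n (fun k => f k *m g k).
Proof. by elim: n f g => [|n IH] f g /=; rewrite ?mul1mx // tensmx_mul IH. Qed.

Lemma ktensZ n (c : nat -> C) f :
  ktens n (fun k => c k *: f k) = (\prod_(k < n) c k) *: ktens n f.
Proof.
elim: n c f => [|n IH] c f /=; first by rewrite big_ord0 scale1r.
by rewrite IH tensmxZl tensmxZr scalerA big_ord_recl.
Qed.

Lemma big_ktens I (r : seq I) (P : pred I) n (F : I -> nat -> 'M[C]_2) :
  \big[mulmx/1%:M]_(i <- r | P i) ktens n (F i) =
  ktens n (fun k => \big[mulmx/1%:M]_(i <- r | P i) F i k).
Proof.
elim: r => [|i r IH].
  by rewrite big_nil -(ktens1 n); apply: eq_ktens => k _; rewrite big_nil.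
rewrite big_cons IH; case: ifP => Pi; first rewrite ktens_mul.
all: by apply: eq_ktens => k _; rewrite big_cons Pi.
Qed.

End Ktens.

Section PauliStrings.

Variable R : rcfType.
Local Notation C := R[i].
Implicit Types a : pauli.

Definition pstring n (f : nat -> pauli) : 'M[C]_(pow2 n) :=
  ktens n (fun k => pauli_mx R (f k)).

Lemma eq_pstring n (f g : nat -> pauli) :
  (forall k, (k < n)%N -> f k = g k) -> pstring n f = pstring n g.
Proof. by move=> fg; apply: eq_ktens => k /fg ->. Qed.

Lemma pstring_mul n (f g : nat -> pauli) : pstring n f *m pstring n g =
  (\prod_(k < n) pauli_phase R (f k) (g k)) *: pstring n (pmulf f g).
Proof.
rewrite ktens_mul -(ktensZ _ (fun k => pauli_phase R (f k) (g k))).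
by apply: eq_ktens => k _; apply: pauli_mx_mul.
Qed.

Lemma prod_pauli_phaseC n (f g : nat -> pauli) :
  \prod_(k < n) pauli_phase R (g k) (f k) =
  (-1) ^+ anticomm_count n f g * \prod_(k < n) pauli_phase R (f k) (g k).
Proof. by rewrite -prodrXr -big_split; apply: eq_bigr => k _; apply: pauli_phaseC. Qed.

Lemma sqr_prod_pauli_phase n (f g : nat -> pauli) :
  (\prod_(k < n) pauli_phase R (f k) (g k)) ^+ 2 = (-1) ^+ anticomm_count n f g.
Proof. by rewrite -prodrXl -prodrXr; apply: eq_bigr => k _; apply: sqr_pauli_phase. Qed.

Lemma sigma_site_pstring M j a : sigma_site R M j a = pstring M (site j a).
Proof. by apply: eq_ktens => k _; rewrite /site /set_site; case: eqP. Qed.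

Lemma sigma_siteXX M j :
  sigma_site R M j PX *m sigma_site R M j.+1 PX =
  pstring M (set_site (site j PX) j.+1 PX).
Proof.
rewrite /sigma_site ktens_mul; apply: eq_ktens => k _; rewrite /site /set_site.
by case: eqP => [->|_]; rewrite ?(ltn_eqF (ltnSn _)) ?mulmx1 ?mul1mx //; case: eqP.
Qed.

Lemma sigma_string_pstring M (al : 'I_M -> pauli) :
  sigma_string R al = pstring M (fun k => oapp al P0 (insub k)).
Proof.
rewrite /sigma_string /sigma_site big_ktens; apply: eq_ktens => k lt_kM.
rewrite insubT /=.
rewrite -[LHS]/(\prod_(j < M) (if k == j then pauli_mx R (al j) else 1 : 'M[C]_2)).
by rewrite -big_mkcond (big_pred1 (Ordinal lt_kM)).
Qed.

End PauliStrings.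

Lemma lie_gen_scaleV (R : rcfType) n (S : 'M[R[i]]_n -> Prop) (r : R) X :
  r != 0 -> lie_gen S (r%:C *: X) -> lie_gen S X.
Proof. by move=> r_neq0 /(lie_scale r^-1); rewrite scalerA -rmorphM mulVf // scale1r. Qed.

Section LiePauliStrings.

Variables (R : rcfType) (N M : nat) (S : 'M[R[i]]_(N * pow2 M) -> Prop).
Local Notation iC := (iC R).
Implicit Types (f g h : nat -> pauli) (a b c : pauli).

Definition lie_pstring f := lie_gen S (iC *: otimes (1%:M : 'M_N) (pstring R M f)).

Lemma lie_pstring_eq f g :
  (forall k, (k < M)%N -> f k = g k) -> lie_pstring f -> lie_pstring g.
Proof. by move=> fg; rewrite /lie_pstring (eq_pstring _ fg). Qed.

Lemma lie_pstring_mul f g : lie_pstring f -> lie_pstring g ->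
  odd (anticomm_count M f g) -> lie_pstring (pmulf f g).
Proof.
move=> Lf Lg odd_fg; set p := \prod_(k < M) pauli_phase R (f k) (g k).
pose O h := otimes (1%:M : 'M_N) (pstring R M h).
have bracket : (iC *: O f) *m (iC *: O g) - (iC *: O g) *m (iC *: O f)
             = - (p *+ 2) *: O (pmulf f g).
  rewrite -!scalemxAl -!scalemxAr !scalerA /O /otimes !tensmx_mul mulmx1.
  rewrite !pstring_mul (prod_pauli_phaseC R M f g) -/p -signr_odd odd_fg.
  rewrite (@eq_pstring _ _ (pmulf g f) (pmulf f g)) => [|k _]; last exact: pauli_mulC.
  rewrite !tensmxZr !scalerA -scalerBl -expr2 sqr_iC expr1 !mulN1r opprK.
  by rewrite -opprD mulr2n.
have /orP[/eqP p_iC | /eqP p_NiC] : (p == iC) || (p == - iC).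
  by rewrite -eqf_sqr sqr_iC sqr_prod_pauli_phase -signr_odd odd_fg.
- apply: (@lie_gen_scaleV _ _ _ (-2)); first by rewrite oppr_eq0 pnatr_eq0.
  move: (lie_bracket Lf Lg); rewrite bracket p_iC scalerA; congr (lie_gen _ (_ *: _)).
  by rewrite rmorphN rmorph_nat mulNr mulr_natl.
- apply: (@lie_gen_scaleV _ _ _ 2); first by rewrite pnatr_eq0.
  move: (lie_bracket Lf Lg); rewrite bracket p_NiC scalerA; congr (lie_gen _ (_ *: _)).
  by rewrite rmorph_nat mulr_natl mulNrn opprK.
Qed.

Hypothesis lie_X : forall j, (j < M)%N -> lie_pstring (site j PX).
Hypothesis lie_Y : forall j, (j < M)%N -> lie_pstring (site j PY).

Lemma lie_site j a : (j < M)%N -> a != P0 -> lie_pstring (site j a).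
Proof.
case: a => // lt_jM _; [exact: lie_X | exact: lie_Y|].
apply: lie_pstring_eq (lie_pstring_mul (lie_X lt_jM) (lie_Y lt_jM) _).
  by move=> k _; rewrite /pmulf /site /set_site; case: eqP.
apply: (odd_anticomm_count1 lt_jM) => [k _ /negbTE|]; rewrite /site /set_site ?eqxx //.
by move=> ->.
Qed.

Lemma lie_set_site f j b : lie_pstring f -> (j < M)%N -> f j != P0 -> b != P0 ->
  lie_pstring (set_site f j b).
Proof.
move=> Lf lt_jM fj_neq0 b_neq0.
have [fj_b|fj_neq_b] := eqVneq (f j) b.
  by apply: lie_pstring_eq Lf => k _; rewrite /set_site; case: eqP => // ->.
have c_neq0 : pauli_mul (f j) b != P0 by rewrite pauli_mul_eq1.
apply: lie_pstring_eq (lie_pstring_mul Lf (lie_site lt_jM c_neq0) _).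
  move=> k _; rewrite /pmulf /site /set_site.
  by case: eqP => [->|_]; rewrite ?pauli_mulKr ?pauli_mulr1.
apply: (odd_anticomm_count1 lt_jM) => [k _ /negbTE|]; rewrite /site /set_site ?eqxx.
  by move=> ->; apply: pauli_commr1.
by apply: pauli_anticomm; rewrite // eq_sym pauli_mul_eql.
Qed.

Hypothesis lie_XX : forall j, (j.+1 < M)%N ->
  lie_pstring (set_site (site j PX) j.+1 PX).

Lemma lie_pair i j a b : (i < M)%N -> (j < M)%N -> adjacent i j ->
  a != P0 -> b != P0 -> lie_pstring (set_site (site i a) j b).
Proof.
have pair_next j' a' b' : (j'.+1 < M)%N -> a' != P0 -> b' != P0 ->
    lie_pstring (set_site (site j' a') j'.+1 b').
  move=> lt_jM a_neq0 b_neq0.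
  have L1 : lie_pstring (set_site (set_site (site j' PX) j'.+1 PX) j' a').
    apply: lie_set_site (lie_XX lt_jM) (ltnW lt_jM) _ a_neq0.
    by rewrite set_site_neq ?(ltn_eqF (ltnSn _)) // /site set_site_eq.
  have L2 : lie_pstring
      (set_site (set_site (set_site (site j' PX) j'.+1 PX) j' a') j'.+1 b').
    apply: lie_set_site L1 lt_jM _ b_neq0.
    by rewrite set_site_neq ?(gtn_eqF (ltnSn _)) // set_site_eq.
  by apply: lie_pstring_eq L2 => k _; rewrite /site /set_site; do ![case: eqP => // ?]; lia.
move=> lt_iM lt_jM /orP[/eqP ji|/eqP ij] a_neq0 b_neq0.
  by rewrite ji in lt_jM *; apply: pair_next.
rewrite ij in lt_iM *.
apply: lie_pstring_eq (pair_next j b a lt_iM b_neq0 a_neq0).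
by move=> k _; rewrite /site /set_site; do ![case: eqP => // ?]; lia.
Qed.

Lemma lie_set_neighbour f i j b : lie_pstring f -> (i < M)%N -> (j < M)%N ->
  adjacent i j -> f i != P0 -> lie_pstring (set_site f j b).
Proof.
move=> Lf lt_iM lt_jM adj_ij fi_neq0; have i_neq_j := adjacent_neq adj_ij.
(* Multiply by the two-site string with an anticommuting label at i and c at j,
   then restore site i. *)
have mul_at_j h c : lie_pstring h -> h i != P0 -> c != P0 -> pauli_comm (h j) c ->
    lie_pstring (set_site h j (pauli_mul (h j) c)).
  move=> Lh hi_neq0 c_neq0 hjc; set a := pauli_other (h i).
  have Lpair := lie_pair lt_iM lt_jM adj_ij (pauli_other_neq1 (h i)) c_neq0.
  have L1 : lie_pstring (pmulf h (set_site (site i a) j c)).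
    apply: lie_pstring_mul Lh Lpair _.
    apply: (odd_anticomm_count1 lt_iM) => [k _ k_neq_i|].
      rewrite /site /set_site (negbTE k_neq_i).
      by case: eqP => [->//|_]; apply: pauli_commr1.
    rewrite set_site_neq // /site set_site_eq.
    by apply: pauli_anticomm; rewrite ?pauli_other_neq1 // eq_sym pauli_other_neq.
  have L2 : lie_pstring (set_site (pmulf h (set_site (site i a) j c)) i (h i)).
    apply: lie_set_site L1 lt_iM _ hi_neq0.
    by rewrite /pmulf set_site_neq // /site set_site_eq pauli_mul_eq1 eq_sym pauli_other_neq.
  apply: lie_pstring_eq L2 => k _; rewrite /pmulf /site /set_site.
  have [->|k_neq_i] := eqVneq k i; first by rewrite (negbTE i_neq_j).
  by case: eqP => [->|_]; rewrite ?pauli_mulr1.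
have Lclear : lie_pstring (set_site f j P0).
  have [fj0|fj_neq0] := eqVneq (f j) P0.
    by apply: lie_pstring_eq Lf => k _; rewrite /set_site; case: eqP => // ->.
  by rewrite -(pauli_mulxx (f j)); apply: mul_at_j; rewrite ?pauli_commrr.
have [->//|b_neq0] := eqVneq b P0.
apply: lie_pstring_eq (mul_at_j _ b Lclear _ b_neq0 _).
- by move=> k _; rewrite /set_site eqxx; case: eqP.
- by rewrite set_site_neq.
- by rewrite set_site_eq pauli_comm1.
Qed.

Lemma lie_pstring_support n f : (n <= M)%N -> (forall k, (n <= k)%N -> f k = P0) ->
  (exists2 k, (k < n)%N & f k != P0) -> lie_pstring f.
Proof.
elim: n f => [|n IH] f le_nM f_out [k lt_kn fk_neq0]; first by [].
have [fn0|fn_neq0] := eqVneq (f n) P0.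
  apply: IH (ltnW le_nM) _ _ => [k' le_nk'|].
    by have [->//|?] := eqVneq k' n; apply: f_out; lia.
  exists k => //; have [kn|?] := eqVneq k n; last lia.
  by rewrite kn fn0 in fk_neq0.
move=> {k lt_kn fk_neq0}; case: n IH le_nM f_out fn_neq0 => [|m] IH le_nM f_out fn_neq0.
  apply: lie_pstring_eq (lie_site le_nM fn_neq0) => k' _.
  by rewrite /site /set_site; case: eqP => [->//|?]; rewrite f_out //; lia.
(* Site m carries the placeholder PZ; sites m+1 and m are then restored in
   turn, each using the other as its non-trivial neighbour. *)
set h := set_site (set_site f m.+1 P0) m PZ.
have Lh : lie_pstring h.
  apply: IH; first lia.
    move=> k' lt_mk'; rewrite /h set_site_neq; last lia.
    by rewrite /set_site; case: eqP => // ?; apply: f_out; lia.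
  by exists m => //; rewrite /h set_site_eq.
have L1 : lie_pstring (set_site h m.+1 (f m.+1)).
  apply: (lie_set_neighbour _ Lh (ltnW le_nM) le_nM).
    by rewrite /adjacent eqxx.
  by rewrite /h set_site_eq.
have L2 : lie_pstring (set_site (set_site h m.+1 (f m.+1)) m (f m)).
  apply: (lie_set_neighbour _ L1 le_nM (ltnW le_nM)).
    by rewrite /adjacent eqxx orbT.
  by rewrite set_site_eq.
apply: lie_pstring_eq L2 => k' _; rewrite /h /set_site.
by do ![case: eqP => [->|?]] => //; lia.
Qed.

End LiePauliStrings.

Unset Implicit Arguments.

Theorem lemma2 (R : rcfType) (N M : nat) (hN : (2 <= N)%N) (hM : (1 <= M)%N)
  (E : 'I_N -> R) (hE : \sum_(j < N) E j = 0)
  (d : nat -> R) (hbar : R) (hhbar : 0 < hbar) (omega : nat -> R) (c : nat -> R)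
  (g : nat -> 'I_2 -> {ffun 'I_M -> bool} -> R) :
  let L := lie_gen (ctrl_gens (H0 E d hbar omega c g)) in
  (forall j : nat, (j.+1 < M)%N ->
     L (iC R *: otimes (1%:M : 'M[R[i]]_N)
                     (sigma_site R M j PX *m sigma_site R M j.+1 PX))) ->
  forall al : 'I_M -> pauli, (exists j, al j <> P0) ->
     L (iC R *: otimes (1%:M : 'M[R[i]]_N) (sigma_string R al)).
Proof.
move=> L lie_XX al [j0 al_j0].
rewrite sigma_string_pstring; apply: (lie_pstring_support _ _ _ (leqnn M)).
- move=> j lt_jM; rewrite /lie_pstring -sigma_site_pstring.
  by apply: lie_base; right; exists (Ordinal lt_jM); left.
- move=> j lt_jM; rewrite /lie_pstring -sigma_site_pstring.
  by apply: lie_base; right; exists (Ordinal lt_jM); right.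
- by move=> j lt_jM; rewrite /lie_pstring -sigma_siteXX; apply: lie_XX.
- by move=> k le_Mk; rewrite insubF // ltnNge le_Mk.
- by exists (val j0); rewrite ?ltn_ord //= valK; apply/eqP.
Qed.
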